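(* The iterated symmetric derivatives $\mathbf D_1,\mathbf D_2,\dots$, viewed as commuting linear operators on $\Lambda$, are algebraically independent over $\mathbb C$. That is, for every $r\ge1$ and every nonzero polynomial $P\in\mathbb C[T_1,\dots,T_r]$, the operator $P(\mathbf D_1,\dots,\mathbf D_r)$ is nonzero.
   Context: $\Lambda$ is the algebra of complex symmetric functions in $y_1,y_2,\dots$, with basis the monomial symmetric functions $m_\lambda$. For $i\ge1$, $\mathbf D_i$ is the linear operator with $\mathbf D_im_\lambda=i!\,m_{\lambda\setminus i}$ if $i$ is a part of $\lambda$ (one part $i$ removed), and $\mathbf D_im_\lambda=0$ otherwise. *)

From HB Require Import structures.
From mathcomp Require Import all_boot all_order all_algebra.
From mathcomp Require Import complex.
From mathcomp Require Import reals.
From mathcomp Require Import mpoly.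

Set Implicit Arguments. Unset Strict Implicit. Unset Printing Implicit Defensive.
Import Order.TTheory GRing.Theory Num.Theory.
Local Open Scope ring_scope.

Definition is_partition (s : seq nat) : bool :=
  sorted geq s && all (fun x => 0 < x)%N s.

Record ipartition := IPartition { pval :> seq nat; pvalP : is_partition pval }.
HB.instance Definition _ := [isSub for pval].
HB.instance Definition _ := [Equality of ipartition by <:].

Lemma addpart_proof (i : nat) (mu : ipartition) :
  is_partition (if (0 < i)%N then sort geq (i :: pval mu) else pval mu).
Proof.
case: ifP => hi; last exact: pvalP.
apply/andP; split.
  apply: sort_sorted => x y; exact: leq_total.
rewrite (perm_all _ (permEl (perm_sort _ _))) /= hi.
by case/andP: (pvalP mu).
Qed.

Definition addpart (i : nat) (mu : ipartition) : ipartition :=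
  IPartition (addpart_proof i mu).

Section SymDer.
Variable C : nzRingType.

(* An element of Lambda is written as sum_lambda f(lambda) m_lambda with
   f : ipartition -> C finitely supported; we work with coefficient functions.
   Since D_i m_lambda = i! m_(lambda \ i), the coefficient of m_mu in D_i f is
   i! * f(mu ∪ {i}). *)
Definition finsupp (f : ipartition -> C) : Prop :=
  exists s : seq ipartition, forall mu, f mu != 0 -> mu \in s.

Definition symD (i : nat) (f : ipartition -> C) : ipartition -> C :=
  fun mu => (i`!)%:R * f (addpart i mu).

(* D_1^(m_1) ... D_r^(m_r) applied to f, for a monomial m in r variables,
   variable T_(k+1) (index k : 'I_r) being sent to D_(k+1). *)
Definition symDmon (r : nat) (m : 'X_{1..r}) (f : ipartition -> C)
  : ipartition -> C :=
  foldr (fun k g => iter (m k) (symD k.+1) g) f (enum 'I_r).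
End SymDer.

Definition symDpoly (C : comNzRingType) (r : nat) (P : {mpoly C[r]})
  (f : ipartition -> C) : ipartition -> C :=
  fun mu => \sum_(m <- msupp P) P@_m * symDmon m f mu.

(* A monomial operator D_1^(m_1) ... D_r^(m_r) sends f to
   mu |-> c_m f(mu ∪ lambda(m)), where lambda(m) has m_k parts equal to k and
   c_m = prod_k (k!)^(m_k) is a nonzero integer.  The partitions lambda(m) are
   pairwise distinct, since m_k is the multiplicity of k in lambda(m).  Hence
   P(D_1, ..., D_r), applied to the indicator function of lambda(m) and
   evaluated at the empty partition, gives c_m times the coefficient of the
   monomial m in P, which is nonzero in characteristic 0 for m in the support
   of P. *)
From HB Require Import structures.
From mathcomp Require Import all_boot all_order all_algebra.
From mathcomp Require Import complex.
From mathcomp Require Import reals.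
From mathcomp Require Import mpoly.

Set Implicit Arguments. Unset Strict Implicit. Unset Printing Implicit Defensive.
Import GRing.Theory Num.Theory.
Local Open Scope ring_scope.

Definition nilpart : ipartition := @IPartition [::] (erefl true).

Lemma perm_addpart (i : nat) (mu : ipartition) :
  (0 < i)%N -> perm_eq (addpart i mu) (i :: mu).
Proof. by move=> i_gt0; rewrite /= i_gt0 perm_sort. Qed.

Lemma count_iter_addpart (i j n : nat) (mu : ipartition) : (0 < i)%N ->
  count_mem j (iter n (addpart i) mu) = (n * (i == j) + count_mem j mu)%N.
Proof.
move=> i_gt0; elim: n => [|n IHn] //=.
by rewrite (permP (perm_addpart _ i_gt0)) /= IHn mulSn addnA eq_sym.
Qed.

Section MonomialOperators.
Variables (r : nat) (m : 'X_{1..r}).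

Definition addparts (s : seq 'I_r) (mu : ipartition) : ipartition :=
  foldl (fun nu (k : 'I_r) => iter (m k) (addpart k.+1) nu) mu s.

Definition mpart : ipartition := addparts (enum 'I_r) nilpart.

Definition mfact : nat := \prod_(k < r) k.+1`! ^ m k.

Lemma count_addparts (s : seq 'I_r) (mu : ipartition) (j : nat) :
  count_mem j (addparts s mu) =
  (\sum_(k <- s) m k * (k.+1 == j) + count_mem j mu)%N.
Proof.
elim: s mu => [|k s IHs] mu /=; first by rewrite big_nil.
by rewrite IHs count_iter_addpart // big_cons addnCA addnA.
Qed.

Lemma count_mpart (j : 'I_r) : count_mem j.+1 mpart = m j.
Proof.
rewrite count_addparts /= addn0 big_enum (bigD1 j) //= eqxx muln1.
by rewrite big1 ?addn0 // => k k_neq_j; rewrite eqSS val_eqE (negbTE k_neq_j) muln0.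
Qed.

Lemma mfact_gt0 : (0 < mfact)%N.
Proof. by rewrite prodn_gt0 // => k; rewrite expn_gt0 fact_gt0. Qed.

Variable C : nzRingType.

Lemma iter_symD (i n : nat) (f : ipartition -> C) (mu : ipartition) :
  iter n (symD i) f mu = (i`! ^ n)%:R * f (iter n (addpart i) mu).
Proof.
elim: n mu => [|n IHn] mu /=; first by rewrite mul1r.
by rewrite /symD IHn -iterSr /= mulrA -natrM -expnS.
Qed.

Lemma foldr_iter_symD (s : seq 'I_r) (f : ipartition -> C) (mu : ipartition) :
  foldr (fun (k : 'I_r) g => iter (m k) (symD k.+1) g) f s mu =
  (\prod_(k <- s) k.+1`! ^ m k)%:R * f (addparts s mu).
Proof.
elim: s mu => [|k s IHs] mu /=; first by rewrite big_nil mul1r.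
by rewrite iter_symD IHs big_cons mulrA -!natrM mulnC.
Qed.

Lemma symDmonE (f : ipartition -> C) (mu : ipartition) :
  symDmon m f mu = mfact%:R * f (addparts (enum 'I_r) mu).
Proof. by rewrite /symDmon foldr_iter_symD big_enum. Qed.

End MonomialOperators.

Lemma mpart_inj (r : nat) : injective (@mpart r).
Proof.
by move=> m m' eq_m; apply/mnmP => j; rewrite -count_mpart eq_m count_mpart.
Qed.

Definition indicator (C : nzRingType) (lam : ipartition) : ipartition -> C :=
  fun mu => (mu == lam)%:R.

Lemma finsupp_indicator (C : nzRingType) (lam : ipartition) :
  finsupp (indicator C lam).
Proof.
by exists [:: lam] => mu; rewrite /indicator inE; case: (mu == lam); rewrite ?eqxx.
Qed.

Lemma symDpoly_indicator_mpart (C : comNzRingType) (r : nat)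
    (P : {mpoly C[r]}) (m : 'X_{1..r}) :
  symDpoly P (indicator C (mpart m)) nilpart = P@_m * (mfact m)%:R.
Proof.
have symDmon_indicator m' :
    symDmon m' (indicator C (mpart m)) nilpart = (m' == m)%:R * (mfact m')%:R.
  by rewrite symDmonE /indicator (inj_eq (@mpart_inj r)) mulrC.
rewrite /symDpoly; under eq_bigr do rewrite symDmon_indicator.
have [m_supp | m_nsupp] := boolP (m \in msupp P).
  rewrite (bigD1_seq m) ?msupp_uniq //= eqxx mul1r big1 ?addr0 // => m' /negbTE.
  by move->; rewrite mul0r mulr0.
have /eqP -> : P@_m == 0 by rewrite mcoeff_eq0.
rewrite mul0r big1_seq // => m' /andP[_ m'_supp].
have /negbTE -> : m' != m by apply: contraNneq m_nsupp => <-.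
by rewrite mul0r mulr0.
Qed.

Theorem symDpoly_neq0 (C : idomainType) (r : nat) (P : {mpoly C[r]}) :
  [pchar C] =i pred0 -> P != 0 ->
  exists2 f : ipartition -> C, finsupp f & exists mu, symDpoly P f mu != 0.
Proof.
move=> C_char0 P_neq0.
have [m m_supp] : exists m, m \in msupp P.
  move: P_neq0; rewrite -msupp_eq0; case: (msupp P) => // m s _.
  by exists m; rewrite mem_head.
exists (indicator C (mpart m)); first exact: finsupp_indicator.
exists nilpart; rewrite symDpoly_indicator_mpart mulf_neq0 -?mcoeff_msupp //.
by rewrite (pcharf0P C).1 // -lt0n mfact_gt0.
Qed.

Theorem mainTheorem8 (R : realType) (r : nat) (P : {mpoly (complex R)[r]}) :
  (1 <= r)%N -> P != 0 ->
  exists f : ipartition -> complex R,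
    finsupp f /\ exists mu : ipartition, symDpoly P f mu != 0.
Proof.
move=> _ P_neq0.
have [f f_finsupp f_nz] := symDpoly_neq0 (@pchar_num (complex R)) P_neq0.
by exists f.
Qed.
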